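(* Let $s\geq1$, let $q$ be a prime power and let $C^{(1)},\ldots,C^{(s)}\in\mathbb{F}_q^{\mathbb{N}\times\mathbb{N}_0}$ be finite-row generating matrices having optimal row-lengths and yielding, via Algorithm 1 (for some admissible choice of the bijections), a $(\mathbf{T},s)$-sequence in base $q$ with $\mathbf{T}\equiv 0$. Let $(s_n)_{n\geq0}$ be a sequence in $\mathbb{Z}_q$. Then, for any choice of bijections $\psi_r$, $\lambda_{i,j}$, the sequence produced by Algorithm 2 with these matrices and input $(s_n)_{n\ge0}$ is uniformly distributed in $[0,1]^s$ if and only if $(s_n)_{n\geq0}$ is uniformly distributed in $\mathbb{Z}_q$.
   Context: $\mathbb{F}_q$ is the finite field with $q$ elements, $D_q=\{0,\ldots,q-1\}$. $\mathbb{Z}_q$ is the ring of $q$-adic integers; each $z\in\mathbb{Z}_q$ has a unique representation $z=\sum_{r\ge0}a_rq^r$, $a_r\in D_q$ (the base-$q$ expansion for nonnegative integers), and $\tau_k(z)=\sum_{r<k}a_rq^r$. $(x_n)$ in $\mathbb{Z}_q$ is uniformly distributed in $\mathbb{Z}_q$ if for all $k\ge1$ and $0\le a<q^k$, $\frac1N\#\{n<N:\tau_k(x_n)\equiv a\bmod q^k\}\to q^{-k}$. A matrix $C^{(i)}=(c^{(i)}_{j,r})_{j\ge1,r\ge0}$ is finite-row if each row has finitely many nonzero entries. The length of row $j$ of $C^{(i)}$ is $\sup\{r:c^{(i)}_{j,r}\neq0\}+1$; the matrices have optimal row-lengths if for all $i\in\{1,\ldots,s\}$ and $j\ge1$ the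 length of row $j$ of $C^{(i)}$ is at most $sj$. Algorithm 2: choose bijections $\psi_r:D_q\to\mathbb{F}_q$ ($r\ge0$), finite-row matrices $C^{(i)}$, bijections $\lambda_{i,j}:\mathbb{F}_q\to D_q$, and $(s_n)$ in $\mathbb{Z}_q$; with $s_n=\sum_r a_rq^r$ put $x_n^{(i)}=\sum_{j\ge1}\lambda_{i,j}(\sum_r c^{(i)}_{j,r}\psi_r(a_r))q^{-j}$, $\boldsymbol{x}_n=(x_n^{(1)},\dots,x_n^{(s)})$. Algorithm 1 is the same with $s_n=n$ and $\psi_r(0)=0$ for all large $r$. The truncation $[x_n^{(i)}]_{q,m}$ is $\sum_{j=1}^m\lambda_{i,j}(\cdots)q^{-j}$ (truncation of this digit expansion), applied coordinatewise to vectors. An elementary interval in base $q$ is $\prod_{i=1}^s[a_iq^{-d_i},(a_i+1)q^{-d_i})$ with integers $d_i\ge0$, $0\le a_i<q^{d_i}$. For integers $0\le t\le m$, a $(t,m,s)$-net in base $q$ is a set of $q^m$ points in $[0,1)^s$ such that every elementary interval of volume $q^{t-m}$ contains exactly $q^t$ of them. For $\mathbf{T}:\mathbb{N}_0\to\mathbb{N}_0$ with $\mathbf{T}(m)\le m$, a sequence $(\boldsymbol{x}_n)$ in $[0,1]^s$ is a $(\mathbf{T},s)$-sequence in base $q$ if for all $k\ge0$ and all $m$ with $\mathbf{T}(m)<m$ the points $[\boldsymbol{x}_n]_{q,m}$, $kq^m\le n<(k+1)q^m$, form a $(\mathbf{T}(m),m,s)$-net in base $q$. A sequence in $[0,1]^s$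 is uniformly distributed if the star discrepancy $\sup_J|A(J)/N-\mathrm{vol}(J)|$ of its first $N$ terms (sup over subintervals $J\subseteq[0,1]^s$ with a vertex at the origin, $A(J)=\#\{n<N:\boldsymbol{x}_n\in J\}$) tends to $0$. *)

From HB Require Import structures.
From mathcomp Require Import all_boot all_order all_algebra.
From mathcomp Require Import boolp classical_sets reals ereal topology normedtype sequences.
Set Implicit Arguments. Unset Strict Implicit. Unset Printing Implicit Defensive.
Import Order.TTheory GRing.Theory Num.Theory numFieldNormedType.Exports.
Local Open Scope classical_set_scope.
Local Open Scope ring_scope.

(* The finite field F_q is F, with q := #|F| (automatically a prime power).
   Digits D_q = {0,...,q-1} are the ordinals 'I_#|F|. *)

Lemma card_field_gt0 (F : finFieldType) : (0 < #|F|)%N.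
Proof. by apply/card_gt0P; exists 0. Qed.

Definition digit0 (F : finFieldType) : 'I_#|F| := Ordinal (card_field_gt0 F).

(* q-adic integers, represented by their (unique) digit sequence (a_r)_{r>=0} *)
Definition zq (F : finFieldType) := nat -> 'I_#|F|.

Definition nat_zq (F : finFieldType) (n : nat) : zq F :=
  fun r => Ordinal (ltn_pmod (n %/ #|F| ^ r) (card_field_gt0 F)).

Definition tau (F : finFieldType) (k : nat) (z : zq F) : nat :=
  (\sum_(r < k) z r * #|F| ^ r)%N.

Definition ud_zq (R : realType) (F : finFieldType) (x : nat -> zq F) : Prop :=
  forall k a, (1 <= k)%N -> (a < #|F| ^ k)%N ->
    let freq : R^nat := fun N =>
       (count (fun n => tau k (x n) == a %[mod #|F| ^ k]) (iota 0 N))%:R / N%:R in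
    let lim : R := #|F|%:R ^- k in
    freq @ \oo --> lim.

(* Generating matrices C^{(i)} = (c^{(i)}_{j,r})_{j>=1, r>=0}; row index 0 unused. *)
Definition finite_row (s : nat) (F : finFieldType) (C : 'I_s -> nat -> nat -> F) : Prop :=
  forall i j, (1 <= j)%N -> exists L, forall r, (L <= r)%N -> C i j r = 0.

Definition optimal_row_lengths (s : nat) (F : finFieldType)
    (C : 'I_s -> nat -> nat -> F) : Prop :=
  forall i j, (1 <= j)%N -> forall r, (s * j <= r)%N -> C i j r = 0.

(* The sum over r is truncated at s*j, which is exact under optimal row-lengths
   (all further entries vanish). *)
Definition alg_digit (s : nat) (F : finFieldType) (C : 'I_s -> nat -> nat -> F)
    (psi : nat -> 'I_#|F| -> F) (lam : 'I_s -> nat -> F -> 'I_#|F|)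
    (z : zq F) (i : 'I_s) (j : nat) : 'I_#|F| :=
  lam i j (\sum_(r < s * j) C i j r * psi r (z r)).

Definition alg_point (R : realType) (s : nat) (F : finFieldType)
    (C : 'I_s -> nat -> nat -> F) (psi : nat -> 'I_#|F| -> F)
    (lam : 'I_s -> nat -> F -> 'I_#|F|) (z : zq F) : 'I_s -> R :=
  fun i => limn (fun N : nat =>
    \sum_(1 <= j < N) ((alg_digit C psi lam z i j : nat)%:R / #|F|%:R ^+ j : R)).

Definition alg_trunc (R : realType) (s : nat) (F : finFieldType)
    (C : 'I_s -> nat -> nat -> F) (psi : nat -> 'I_#|F| -> F)
    (lam : 'I_s -> nat -> F -> 'I_#|F|) (m : nat) (z : zq F) : 'I_s -> R :=
  fun i => \sum_(1 <= j < m.+1) ((alg_digit C psi lam z i j : nat)%:R / #|F|%:R ^+ j).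

Definition in_elementary (R : realType) (s q : nat) (d a : 'I_s -> nat)
    (y : 'I_s -> R) : bool :=
  [forall i, ((a i)%:R / q%:R ^+ d i <= y i) && (y i < (a i).+1%:R / q%:R ^+ d i)].

Definition is_net (R : realType) (s q t m : nat) (P : nat -> 'I_s -> R)
    (start : nat) : Prop :=
  forall (d a : 'I_s -> nat), (\sum_i d i)%N = (m - t)%N ->
    (forall i, (a i < q ^ d i)%N) ->
    count (fun n => in_elementary q d a (P n)) (iota start (q ^ m)) = (q ^ t)%N.

Definition is_Tseq (R : realType) (s q : nat) (T : nat -> nat)
    (x : nat -> 'I_s -> R) (tr : nat -> nat -> 'I_s -> R) : Prop :=
  (forall n i, 0 <= x n i <= 1) /\ (forall m, (T m <= m)%N) /\
  forall k m, (T m < m)%N -> is_net q (T m) m (tr m) (k * q ^ m).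

Definition star_discrepancy (R : realType) (s : nat) (x : nat -> 'I_s -> R)
    (N : nat) : R :=
  sup [set `| (count (fun n => [forall i, (0 <= x n i) && (x n i < t i)])
                      (iota 0 N))%:R / N%:R - \prod_i t i |
      | t in [set t : 'I_s -> R | forall i, 0 <= t i <= 1]].

Definition ud_cube (R : realType) (s : nat) (x : nat -> 'I_s -> R) : Prop :=
  let D : R^nat := star_discrepancy x in D @ \oo --> (0 : R).

From HB Require Import structures.
From mathcomp Require Import all_boot all_order all_algebra.
From mathcomp Require Import boolp classical_sets reals ereal topology normedtype sequences.
From mathcomp Require Import zify ring lra.
Set Implicit Arguments. Unset Strict Implicit. Unset Printing Implicit Defensive.
Import Order.TTheory GRing.Theory Num.Theory numFieldNormedType.Exports.
Local Open Scope classical_set_scope.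
Local Open Scope ring_scope.

(* For fixed m, the cube of side q^-m containing the point produced from z in Z_q (its
   first m digits in every coordinate) depends only on the first s m digits of z: through
   the row sums sum_{r < s j} c^(i)_{j,r} psi_r(a_r), j <= m, followed by the bijections
   lambda_{i,j}. For Algorithm 1 the (0,s)-sequence property makes this map from the
   q^(s m) digit prefixes to the q^(s m) cubes surjective, hence bijective; so the
   row-sum map is injective, and the prefix-to-cube map is bijective for every choice of
   psi and lambda. Hence (s_n) is uniformly distributed in Z_q iff for every m each cube
   of side q^-m receives asymptotic frequency q^(-s m). This is in turn equivalent to
   uniform distribution in [0,1]^s: anchored boxes are sandwiched between unions of
   cubes, and conversely each cube contains a slightly smaller box whose discrepancy is
   controlled by inclusion-exclusion over its 2^s corners. *)

(** * Base-q digit expansions *)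

Fixpoint digits_val (q : nat) (d : nat -> nat) (m : nat) : nat :=
  if m is m'.+1 then (digits_val q d m' * q + d m)%N else 0%N.

Section DigitExpansion.
Variables (q : nat) (d : nat -> nat).
Hypothesis d_lt : forall j, (d j < q)%N.

Lemma digits_val_lt m : (digits_val q d m < q ^ m)%N.
Proof.
elim: m => [|m IH] //=; have := d_lt m.+1; rewrite expnSr.
have : ((digits_val q d m).+1 * q <= q ^ m * q)%N by rewrite leq_mul2r IH orbT.
nia.
Qed.

Lemma digits_val_bounds m l :
  (digits_val q d m * q ^ l <= digits_val q d (m + l) < (digits_val q d m).+1 * q ^ l)%N.
Proof.
elim: l => [|l IH]; first by rewrite addn0 !muln1 leqnn ltnSn.
rewrite addnS /= expnS; have := d_lt (m + l).+1; nia.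
Qed.

Lemma digits_val_inj d' m : (forall j, (d' j < q)%N) ->
  digits_val q d m = digits_val q d' m -> forall j, (1 <= j <= m)%N -> d j = d' j.
Proof.
move=> d'_lt; elim: m => [|m IH] /= e j; first by case/andP=> /leq_trans H/H.
have q_gt0 : (0 < q)%N by apply: leq_ltn_trans (d_lt 0).
have := congr1 (edivn^~ q) e; rewrite !edivn_eq // => -[/IH {}IH dm].
by case/andP=> j1; rewrite leq_eqVlt ltnS => /orP[/eqP->|jm] //; apply: IH; rewrite j1.
Qed.

Lemma digits_val_ratio_bounds (R : realFieldType) m k : (m <= k)%N ->
  (digits_val q d m)%:R / q%:R ^+ m <= (digits_val q d k)%:R / q%:R ^+ k :> R /\
  (digits_val q d k)%:R / q%:R ^+ k < (digits_val q d m).+1%:R / q%:R ^+ m :> R.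
Proof.
move=> mk; have /andP[lo hi] := digits_val_bounds m (k - m); rewrite subnKC // in lo hi.
have q_gt0 : (0 : R) < q%:R by rewrite ltr0n (leq_ltn_trans _ (d_lt 0)).
have ek : q%:R ^+ k = q%:R ^+ m * q%:R ^+ (k - m) :> R by rewrite -exprD subnKC.
rewrite ler_pdivlMr ?ltr_pdivrMr ?exprn_gt0 // ek !mulrA !divfK ?expf_neq0 ?gt_eqF //.
by rewrite -natrX -!natrM ler_nat ltr_nat lo hi.
Qed.

End DigitExpansion.

Lemma eq_digits_val q d d' m : (forall j, (1 <= j <= m)%N -> d j = d' j) ->
  digits_val q d m = digits_val q d' m.
Proof.
elim: m => [|m IH] //= h; rewrite IH ?h ?leqnn // => j /andP[j1 jm].
by apply: h; rewrite j1 ltnW.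
Qed.

Lemma sum_digits_val (R : realFieldType) q d m : (0 < q)%N ->
  \sum_(1 <= j < m.+1) ((d j)%:R / q%:R ^+ j : R) = (digits_val q d m)%:R / q%:R ^+ m.
Proof.
move=> q_gt0; have qR : q%:R != 0 :> R by rewrite pnatr_eq0 -lt0n.
elim: m => [|m IH]; first by rewrite big_geq // mul0r.
rewrite big_nat_recr //= IH natrD natrM exprSr; field; by rewrite qR expf_neq0.
Qed.

Section DigitSeries.
Variables (R : realType) (q : nat) (d : nat -> nat).
Hypothesis d_lt : forall j, (d j < q)%N.

Local Notation partial :=
  (fun N : nat => \sum_(1 <= j < N) ((d j)%:R / q%:R ^+ j : R)).

Let q_gt0 : (0 < q)%N. Proof. exact: leq_ltn_trans (d_lt 0). Qed.

Let partialS N : partial N.+1 = (digits_val q d N)%:R / q%:R ^+ N.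
Proof. exact: sum_digits_val. Qed.

Let partial_nondecreasing : nondecreasing_seq partial.
Proof.
move=> n m nm /=; case: (leqP n 1) => [n1|/ltnW n1].
  by rewrite big_geq // sumr_ge0 // => j _; rewrite divr_ge0 ?exprn_ge0.
by rewrite [leRHS](big_cat_nat n1 nm) lerDl sumr_ge0 // => j _; rewrite divr_ge0 ?exprn_ge0.
Qed.

Let partial_le1 N : partial N <= 1.
Proof.
case: N => [|N]; first by rewrite big_geq.
rewrite partialS ler_pdivrMr ?exprn_gt0 ?ltr0n // mul1r -natrX ler_nat ltnW //.
exact: digits_val_lt.
Qed.

Lemma digit_series_cvg : cvgn partial.
Proof.
apply: nondecreasing_is_cvgn partial_nondecreasing _.
by exists 1 => _ [n _ <-]; exact: partial_le1.
Qed.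

Lemma digit_series_bounds m :
  (digits_val q d m)%:R / q%:R ^+ m <= limn partial <= (digits_val q d m).+1%:R / q%:R ^+ m.
Proof.
have near_m : \forall N \near \oo, (digits_val q d m)%:R / q%:R ^+ m <= partial N /\
    partial N <= (digits_val q d m).+1%:R / q%:R ^+ m.
  exists m.+1 => // -[//|N] /=; rewrite ltnS => mN; rewrite partialS.
  by have [-> /ltW ->] := digits_val_ratio_bounds d_lt R mN.
apply/andP; split; [apply: limr_ge digit_series_cvg _ | apply: limr_le digit_series_cvg _].
  by apply: filterS near_m => N [].
by apply: filterS near_m => N [].
Qed.

End DigitSeries.

Lemma interval_index_unique (R : realFieldType) (a b : nat) (c y : R) : 0 < c ->
  a%:R / c <= y < a.+1%:R / c -> b%:R / c <= y < b.+1%:R / c -> a = b.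
Proof.
move=> c_gt0 /andP[ay ya] /andP[b_y yb].
move: (le_lt_trans ay yb) (le_lt_trans b_y ya).
rewrite !ltr_pM2r ?invr_gt0 // !ltr_nat; lia.
Qed.

Lemma card_finField_gt1 (F : finFieldType) : (1 < #|F|)%N.
Proof. by apply/card_gt1P; exists (0 : F), (1 : F); split => //; rewrite eq_sym oner_neq0. Qed.

Section QAdicPrefix.
Variable F : finFieldType.
Local Notation q := #|F|.

Lemma tau_lt k (z : zq F) : (tau k z < q ^ k)%N.
Proof.
rewrite /tau; elim: k => [|k IH]; first by rewrite big_ord0.
rewrite big_ord_recr /= expnS.
have : ((z k).+1 * q ^ k <= q * q ^ k)%N by rewrite leq_mul2r ltn_ord orbT.
by apply: leq_trans; rewrite mulSn ltn_add2r.
Qed.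

Lemma tau_inj k (z z' : zq F) : tau k z = tau k z' -> forall r, (r < k)%N -> z r = z' r.
Proof.
elim: k => [|k IH] //; rewrite /tau !big_ord_recr /= => e r.
have := congr1 (edivn^~ (q ^ k)%N) e; rewrite ![(_ + _ * _)%N]addnC.
rewrite !edivn_eq ?tau_lt // => -[/val_inj zk /IH {}IH].
by rewrite ltnS leq_eqVlt => /orP[/eqP->|/IH].
Qed.

Definition prefix k (z : zq F) : {ffun 'I_k -> 'I_q} := [ffun r : 'I_k => z r].

Definition pad k (t : {ffun 'I_k -> 'I_q}) : zq F :=
  fun r => odflt (digit0 F) (omap t (insub r)).

Lemma pad_prefix k z r : (r < k)%N -> pad (prefix k z) r = z r.
Proof. by move=> rk; rewrite /pad insubT /= ffunE. Qed.

Lemma prefix_inj k z z' : prefix k z = prefix k z' -> forall r, (r < k)%N -> z r = z' r.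
Proof. by move=> e r rk; rewrite -(pad_prefix z rk) -(pad_prefix z' rk) e. Qed.

Lemma eq_tau_mod_pad k (z : zq F) (t : {ffun 'I_k -> 'I_q}) :
  (tau k z == tau k (pad t) %[mod q ^ k]) = (prefix k z == t).
Proof.
rewrite !modn_small ?tau_lt //; apply/eqP/eqP => [/tau_inj e|<-].
  by apply/ffunP => r; rewrite ffunE e // /pad valK.
by apply: eq_bigr => r _; rewrite pad_prefix.
Qed.

End QAdicPrefix.

(** * Cells of the digital construction *)

Section Cells.
Variables (R : realType) (F : finFieldType) (s : nat) (C : 'I_s -> nat -> nat -> F).
Local Notation q := #|F|.

Section FixedBijections.
Variables (psi : nat -> 'I_q -> F) (lam : 'I_s -> nat -> F -> 'I_q).

Local Notation digits z i := (fun j => nat_of_ord (alg_digit C psi lam z i j)).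

Definition cell m (z : zq F) : {ffun 'I_s -> 'I_(q ^ m)} :=
  [ffun i => Ordinal (digits_val_lt (fun j => ltn_ord (alg_digit C psi lam z i j)) m)].

Lemma cellE m z i : cell m z i = digits_val q (digits z i) m :> nat.
Proof. by rewrite ffunE. Qed.

Lemma alg_trunc_cell m z i : alg_trunc R C psi lam m z i = (cell m z i)%:R / q%:R ^+ m.
Proof. by rewrite cellE -sum_digits_val ?card_field_gt0. Qed.

Lemma cell_refine m k z i : (m <= k)%N ->
  (cell m z i)%:R / q%:R ^+ m <= ((cell k z i)%:R / q%:R ^+ k : R) < (cell m z i).+1%:R / q%:R ^+ m.
Proof.
rewrite !cellE => mk.
by have [-> ->] := digits_val_ratio_bounds (fun j => ltn_ord (alg_digit C psi lam z i j)) R mk.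
Qed.

Lemma alg_point_in_cell m z i :
  (cell m z i)%:R / q%:R ^+ m <= alg_point R C psi lam z i <= (cell m z i).+1%:R / q%:R ^+ m.
Proof. rewrite cellE; exact: digit_series_bounds. Qed.

Lemma eq_cell m z z' : (forall r, (r < s * m)%N -> z r = z' r) -> cell m z = cell m z'.
Proof.
move=> zz'; apply/ffunP => i; apply: val_inj; rewrite /= !cellE.
apply: eq_digits_val => j /andP[_ jm]; congr (nat_of_ord (lam _ _ _)).
by apply: eq_bigr => r _; rewrite zz' // (leq_trans (ltn_ord r)) // leq_mul2l jm orbT.
Qed.

Definition cell_of_prefix m (t : {ffun 'I_(s * m) -> 'I_q}) := cell m (pad t).

Lemma cell_prefix m z : cell m z = cell_of_prefix (prefix (s * m) z).
Proof. by apply: eq_cell => r rk; rewrite pad_prefix. Qed.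

End FixedBijections.

Section Algorithm1.
Variables (psi1 : nat -> 'I_q -> F) (lam1 : 'I_s -> nat -> F -> 'I_q).
Hypothesis psi1_bij : forall r, bijective (psi1 r).
Hypothesis net1 : forall m, (0 < m)%N ->
  is_net q 0 m (fun n => alg_trunc R C psi1 lam1 m (nat_zq F n)) 0.
Hypothesis s_gt0 : (0 < s)%N.

(* A cube of side q^-m is an elementary interval of volume q^-(s m), so it contains
   the truncation to s m digits of one of the first q^(s m) points. *)
Lemma cell1_surj m A : (0 < m)%N -> exists n, cell psi1 lam1 m (nat_zq F n) = A.
Proof.
move=> m_gt0; have sm_gt0 : (0 < s * m)%N by rewrite muln_gt0 s_gt0.
have := net1 sm_gt0 (d := fun _ => m) (a := fun i => A i).
rewrite subn0 sum_nat_const card_ord => /(_ erefl (fun i => ltn_ord _)) hit.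
have /hasP[n _ /forallP n_in] : has (fun n => in_elementary q (fun=> m) (fun i => A i)
    (alg_trunc R C psi1 lam1 (s * m) (nat_zq F n))) (iota 0 (q ^ (s * m))).
  by rewrite has_count hit.
exists n; apply/ffunP => i; apply: val_inj => /=.
apply: (@interval_index_unique R _ _ (q%:R ^+ m)
          (alg_trunc R C psi1 lam1 (s * m) (nat_zq F n) i)).
- by rewrite exprn_gt0 // ltr0n card_field_gt0.
- by rewrite alg_trunc_cell cell_refine // leq_pmull.
- exact: n_in.
Qed.

Lemma cell_of_prefix1_inj m : (0 < m)%N -> injective (@cell_of_prefix psi1 lam1 m).
Proof.
move=> m_gt0; set f := @cell_of_prefix psi1 lam1 m.
have onto A : exists t, f t == A.
  by have [n <-] := cell1_surj A m_gt0; exists (prefix (s * m) (nat_zq F n)); rewrite cell_prefix.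
pose g A := xchoose (onto A); have fK : cancel g f by move=> A; apply/eqP/(xchooseP (onto A)).
have [g' gK Kg] : bijective g.
  by apply: inj_card_bij (can_inj fK) _; rewrite !card_ffun !card_ord -expnM mulnC.
by move=> t t'; rewrite -(Kg t) -(Kg t') !fK => ->.
Qed.

Lemma row_sums_inj m (v v' : nat -> F) : (0 < m)%N ->
  (forall i j, (1 <= j <= m)%N ->
    \sum_(r < s * j) C i j r * v r = \sum_(r < s * j) C i j r * v' r) ->
  forall r, (r < s * m)%N -> v r = v' r.
Proof.
move=> m_gt0 eq_rows.
have psi1_onto (w : nat -> F) : {z : zq F & forall r, psi1 r (z r) = w r}.
  apply: (@choice _ _ (fun r a => psi1 r a = w r)) => r.
  by have [g _ K] := psi1_bij r; exists (g (w r)).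
have [[z zE] [z' z'E]] := (psi1_onto v, psi1_onto v').
have : cell psi1 lam1 m z = cell psi1 lam1 m z'.
  apply/ffunP => i; apply: val_inj; rewrite /= !cellE; apply: eq_digits_val => j /eq_rows e.
  rewrite /alg_digit; congr (nat_of_ord (lam1 _ _ _)).
  by under eq_bigr do rewrite zE; under [RHS]eq_bigr do rewrite z'E.
by rewrite !cell_prefix => /(cell_of_prefix1_inj m_gt0)/prefix_inj e r /e; rewrite -zE -z'E => ->.
Qed.

Lemma cell_of_prefix_bij psi lam m : (0 < m)%N ->
  (forall r, bijective (psi r)) -> (forall i j, bijective (lam i j)) ->
  bijective (@cell_of_prefix psi lam m).
Proof.
move=> m_gt0 psi_bij lam_bij.
apply: inj_card_bij; last by rewrite !card_ffun !card_ord -expnM mulnC.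
move=> t t' e; pose v (t : {ffun 'I_(s * m) -> 'I_q}) r := psi r (pad t r).
have same_rows i j : (1 <= j <= m)%N ->
    \sum_(r < s * j) C i j r * v t r = \sum_(r < s * j) C i j r * v t' r.
  move=> jm; apply/(bij_inj (lam_bij i j))/val_inj.
  have := congr1 (fun A : {ffun _} => nat_of_ord (A i)) e; rewrite !cellE.
  by move/digits_val_inj; apply=> // k; apply: ltn_ord.
apply/ffunP => r; have := row_sums_inj m_gt0 same_rows (ltn_ord r).
by move/(bij_inj (psi_bij r)); rewrite /pad valK.
Qed.

End Algorithm1.

End Cells.

(** * Uniform distribution in Z_q *)

Lemma count_nat_sum (T : Type) (P : pred T) (r : seq T) :
  count P r = (\sum_(x <- r) P x)%N.
Proof. by elim: r => [|x r IH]; rewrite ?big_nil ?big_cons //= IH. Qed.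

Section Frequency.
Variable R : realFieldType.

Definition freq (P : pred nat) (N : nat) : R := (count P (iota 0 N))%:R / N%:R.

Lemma freq_ge0 P N : 0 <= freq P N.
Proof. by rewrite divr_ge0. Qed.

Lemma freq_le1 P N : freq P N <= 1.
Proof.
case: N => [|N]; first by rewrite /freq invr0 mulr0.
by rewrite ler_pdivrMr ?ltr0n // mul1r ler_nat -[X in (_ <= X)%N](size_iota 0 N.+1) count_size.
Qed.

Lemma ler_freq (P Q : pred nat) N : subpred P Q -> freq P N <= freq Q N.
Proof. by move=> PQ; rewrite ler_wpM2r ?invr_ge0 // ler_nat sub_count. Qed.

Lemma freqT N : (0 < N)%N -> freq xpredT N = 1.
Proof. by move=> N_gt0; rewrite /freq count_predT size_iota divff // pnatr_eq0 -lt0n. Qed.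

Lemma freq_lincomb (I : finType) (w : I -> R) (P : pred nat) (Q : I -> pred nat) N :
  (forall n, (P n)%:R = \sum_d w d * (Q d n)%:R) ->
  freq P N = \sum_d w d * freq (Q d) N.
Proof.
move=> PQ; rewrite /freq count_nat_sum natr_sum (eq_bigr _ (fun n _ => PQ n)) exchange_big.
rewrite mulr_suml; apply: eq_bigr => d _.
by rewrite count_nat_sum natr_sum -mulr_sumr mulrA.
Qed.

End Frequency.

Section UniformDistributionZq.
Variables (R : realType) (F : finFieldType) (sn : nat -> zq F).
Local Notation q := #|F|.

Definition prefix_equidistributed k := forall t : {ffun 'I_k -> 'I_q},
  freq R (fun n => prefix k (sn n) == t) N @[N --> \oo] --> (q%:R ^+ k : R)^-1.

Lemma ud_zq_prefixP :
  ud_zq R sn <-> forall k, (1 <= k)%N -> prefix_equidistributed k.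
Proof.
have freq_tau k t : (fun n => tau k (sn n) == tau k (pad t) %[mod q ^ k]) =
    (fun n => prefix k (sn n) == t) by apply/funext => n; rewrite eq_tau_mod_pad.
split=> [ud k k_gt0 t | ud k a k_gt0 a_lt].
  by have := ud k _ k_gt0 (tau_lt k (pad t)); rewrite /= freq_tau.
pose tau_pad (t : {ffun 'I_k -> 'I_q}) : 'I_(q ^ k) := Ordinal (tau_lt k (pad t)).
have tau_pad_inj : injective tau_pad.
  move=> t t' /(congr1 val)/tau_inj e; apply/ffunP => r.
  by have := e r (ltn_ord r); rewrite /pad valK.
have card_le : (#|'I_(q ^ k)| <= #|{ffun 'I_k -> 'I_q}|)%N by rewrite card_ffun !card_ord.
have /codomP[t /(congr1 val)/= ->] := inj_card_onto tau_pad_inj card_le (Ordinal a_lt).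
by rewrite /= freq_tau; apply: ud.
Qed.

Lemma prefix_equidistributed_pred k :
  prefix_equidistributed k.+1 -> prefix_equidistributed k.
Proof.
move=> ud t; pose ext (d : 'I_q) := prefix k.+1 (fun r => if r == k then d else pad t r).
have prefix_ext z d : (prefix k.+1 z == ext d) = (prefix k z == t) && (z k == d).
  apply/eqP/andP => [e | [/eqP zt /eqP zd]].
    split; last by have := congr1 (fun f : {ffun _} => f ord_max) e; rewrite !ffunE eqxx => ->.
    apply/eqP/ffunP => r; have := congr1 (fun f : {ffun _} => f (widen_ord (leqnSn k) r)) e.
    by rewrite !ffunE /= ltn_eqF // /pad valK.
  apply/ffunP => r; rewrite !ffunE; case: (eqVneq (r : nat) k) => [-> | rk]; first exact: zd.
  by rewrite -zt pad_prefix // ltn_neqAle rk -ltnS ltn_ord.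
have split_freq N : freq R (fun n => prefix k (sn n) == t) N =
    \sum_d 1 * freq R (fun n => prefix k.+1 (sn n) == ext d) N.
  apply: freq_lincomb => n; rewrite (bigD1 (sn n k)) //= prefix_ext eqxx andbT mul1r.
  by rewrite big1 ?addr0 // => d; rewrite prefix_ext eq_sym => /negbTE ->; rewrite andbF mulr0.
have -> : (q%:R ^+ k : R)^-1 = \sum_(d : 'I_q) 1 * (q%:R ^+ k.+1)^-1.
  have q_neq0 : q%:R != 0 :> R by rewrite pnatr_eq0 -lt0n card_field_gt0.
  by rewrite sumr_const card_ord mul1r exprS -mulr_natr; field; rewrite mul1r q_neq0 expf_neq0.
rewrite (funext split_freq); apply: cvg_big => // [|d _]; first exact: add_continuous.
by apply: cvgZr; apply: ud.
Qed.

Lemma prefix_equidistributed_le k l :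
  (k <= l)%N -> prefix_equidistributed l -> prefix_equidistributed k.
Proof.
move=> /subnKC <-; elim: (l - k)%N => [|n IH]; first by rewrite addn0.
by rewrite addnS => /prefix_equidistributed_pred.
Qed.

End UniformDistributionZq.

Definition cell_equidistributed (R : realType) (s q m : nat)
    (key : nat -> {ffun 'I_s -> 'I_(q ^ m)}) :=
  forall A, freq R (fun n => key n == A) N @[N --> \oo] --> (q%:R ^+ (s * m) : R)^-1.

Section CellsOfZqSequence.
Variables (R : realType) (F : finFieldType) (s : nat) (C : 'I_s -> nat -> nat -> F).
Local Notation q := #|F|.
Variables (psi1 : nat -> 'I_q -> F) (lam1 : 'I_s -> nat -> F -> 'I_q).
Hypothesis psi1_bij : forall r, bijective (psi1 r).
Hypothesis net1 : forall m, (0 < m)%N ->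
  is_net q 0 m (fun n => alg_trunc R C psi1 lam1 m (nat_zq F n)) 0.
Hypothesis s_gt0 : (0 < s)%N.
Variables (psi : nat -> 'I_q -> F) (lam : 'I_s -> nat -> F -> 'I_q) (sn : nat -> zq F).
Hypothesis psi_bij : forall r, bijective (psi r).
Hypothesis lam_bij : forall i j, bijective (lam i j).

Lemma cell_equidistributed_prefix m : (0 < m)%N ->
  cell_equidistributed R (fun n => cell C psi lam m (sn n)) <->
  prefix_equidistributed R sn (s * m).
Proof.
move=> m_gt0; have [g fK Kf] := cell_of_prefix_bij psi1_bij net1 s_gt0 m_gt0 psi_bij lam_bij.
have freq_cell A : (fun n => cell C psi lam m (sn n) == A) =
    (fun n => prefix (s * m) (sn n) == g A).
  by apply/funext => n; rewrite cell_prefix -(can_eq fK) Kf.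
split=> [ud t | ud A]; last by rewrite freq_cell; apply: ud.
by have := ud (cell_of_prefix C psi lam t); rewrite freq_cell fK.
Qed.

Lemma ud_zq_cellsP : ud_zq R sn <->
  forall m, (0 < m)%N -> cell_equidistributed R (fun n => cell C psi lam m (sn n)).
Proof.
rewrite ud_zq_prefixP; split=> [ud m m_gt0 | ud k k_gt0].
  by apply/cell_equidistributed_prefix => //; apply: ud; rewrite muln_gt0 s_gt0.
apply: (@prefix_equidistributed_le _ _ _ _ (s * k)); first by rewrite leq_pmull.
exact/cell_equidistributed_prefix/ud.
Qed.

End CellsOfZqSequence.

(** * Star discrepancy versus cell frequencies *)

Section ProductBounds.
Variable R : realDomainType.

Lemma prod_in01 (I : Type) (r : seq I) (u : I -> R) :
  (forall i, 0 <= u i <= 1) -> 0 <= \prod_(i <- r) u i <= 1.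
Proof.
move=> u01; elim: r => [|a r IH]; first by rewrite big_nil ler01 lexx.
by rewrite big_cons; have /andP[? ?] := u01 a; case/andP: IH => ? ?; rewrite mulr_ge0 ?mulr_ile1.
Qed.

Lemma normr_prodB_le (I : Type) (r : seq I) (u v : I -> R) :
  (forall i, 0 <= u i <= 1) -> (forall i, 0 <= v i <= 1) ->
  `|\prod_(i <- r) u i - \prod_(i <- r) v i| <= \sum_(i <- r) `|u i - v i|.
Proof.
move=> u01 v01; elim: r => [|a r IH]; first by rewrite !big_nil subrr normr0.
rewrite !big_cons; set U := \prod_(j <- r) u j; set V := \prod_(j <- r) v j.
have /andP[U0 U1] := prod_in01 r u01; have /andP[va0 va1] := v01 a.
have -> : u a * U - v a * V = (u a - v a) * U + v a * (U - V) by ring.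
apply: le_trans (ler_normD _ _) _; rewrite !normrM (ger0_norm U0) (ger0_norm va0).
by apply: lerD; [rewrite ler_piMr | apply: le_trans IH; rewrite ler_piMl].
Qed.

Lemma prodrB_expand (I : finType) (a b : I -> R) :
  \prod_i (b i - a i) =
  \sum_(f : {ffun I -> bool}) (-1) ^+ #|[pred i | f i]| * \prod_i (if f i then a i else b i).
Proof.
have sum_bool i : b i - a i = \sum_(c : bool) (if c then - a i else b i).
  by rewrite big_bool addrC.
rewrite (eq_bigr _ (fun i _ => sum_bool i)) bigA_distr_bigA /=.
apply: eq_bigr => f _; rewrite -prodr_const [X in _ = X * _]big_mkcond -big_split /=.
by apply: eq_bigr => i _; rewrite inE; case: (f i); rewrite ?mulN1r ?mul1r.
Qed.

End ProductBounds.

Lemma natr_forall (R : comNzSemiRingType) (I : finType) (P : pred I) :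
  ([forall i, P i] : nat)%:R = \prod_i (P i : nat)%:R :> R.
Proof.
have [/forallP P_all | /forallPn[i Pi]] := boolP [forall i, P i].
  by rewrite big1 // => i _; rewrite P_all.
by rewrite (bigD1 i) //= (negbTE Pi) mul0r.
Qed.

Definition unit_cube {R : realType} {s : nat} := [set t : 'I_s -> R | forall i, 0 <= t i <= 1].

Section StarDiscrepancy.
Variables (R : realType) (s : nat) (x : nat -> 'I_s -> R).

Definition in_box (a b : 'I_s -> R) n := [forall i, (a i <= x n i) && (x n i < b i)].

Local Notation anchored t := (in_box (fun=> 0) t).

Lemma local_discrepancy_le t N : unit_cube t ->
  `|freq R (anchored t) N - \prod_i t i| <= star_discrepancy x N.
Proof.
move=> t01; apply: ub_le_sup; last by exists t.
exists 2 => _ [u u01 <-]; apply: le_trans (ler_normB _ _) _.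
have /andP[p0 p1] := prod_in01 (index_enum 'I_s) u01.
by rewrite !ger0_norm ?freq_ge0 // -[2]/(1 + 1) lerD ?freq_le1.
Qed.

Lemma star_discrepancy_le e N :
  (forall t, unit_cube t -> `|freq R (anchored t) N - \prod_i t i| <= e) ->
  star_discrepancy x N <= e.
Proof.
move=> le_e; apply: ge_sup => [|_ [t t01 <-]]; last exact: le_e.
by eexists; exists (fun=> 0) => // i; rewrite lexx ler01.
Qed.

Lemma star_discrepancy_ge0 N : 0 <= star_discrepancy x N.
Proof.
by apply: le_trans (local_discrepancy_le (t := fun=> 0) _ _) => // i; rewrite lexx ler01.
Qed.

(* Inclusion-exclusion over the 2^s corners writes a box as a signed sum of anchored boxes. *)
Lemma box_discrepancy_le (a b : 'I_s -> R) N :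
  (forall i, 0 <= a i <= b i) -> (forall i, b i <= 1) ->
  `|freq R (in_box a b) N - \prod_i (b i - a i)| <= (2 ^ s)%:R * star_discrepancy x N.
Proof.
move=> ab b1; pose corner (f : {ffun 'I_s -> bool}) i := if f i then a i else b i.
pose sign (f : {ffun 'I_s -> bool}) : R := (-1) ^+ #|[pred i | f i]|.
have freq_box : freq R (in_box a b) N = \sum_f sign f * freq R (anchored (corner f)) N.
  apply: freq_lincomb => n; rewrite natr_forall.
  pose ind (c : R) i : R := ((0 <= x n i) && (x n i < c) : nat)%:R.
  rewrite (eq_bigr (fun i => ind (b i) i - ind (a i) i)) ?prodrB_expand => [|i _].
    apply: eq_bigr => f _; rewrite natr_forall; congr (_ * _).
    by apply: eq_bigr => i _; rewrite /ind /corner; case: (f i).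
  have /andP[a0 ab_i] := ab i; rewrite /ind; case: (lerP (a i) (x n i)) => [ax | xa] /=.
    by rewrite (le_trans a0 ax) subr0.
  by rewrite (lt_le_trans xa ab_i) !andbT subrr.
rewrite freq_box prodrB_expand -sumrB; apply: le_trans (ler_norm_sum _ _ _) _.
have -> : (2 ^ s)%:R * star_discrepancy x N = \sum_(f : {ffun 'I_s -> bool}) star_discrepancy x N.
  by rewrite sumr_const card_ffun card_bool card_ord mulr_natl.
apply: ler_sum => f _.
rewrite -mulrBr normrM normrX normrN1 expr1n !mul1r; apply: local_discrepancy_le => i.
rewrite /corner; have /andP[? ?] := ab i; have := b1 i; case: (f i) => /= ?; apply/andP; split; lra.
Qed.

End StarDiscrepancy.

Lemma dist_le_of_lower_bounds (R : realFieldType) (I : finType) (g : I -> R) (w eta : R) i0 :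
  #|I|%:R * w = 1 -> \sum_i g i = 1 -> (forall i, w - eta <= g i) -> 0 <= eta ->
  `|w - g i0| <= #|I|%:R * eta.
Proof.
move=> card_w sum_g g_ge eta_ge0.
have card_ge1 : 1 <= #|I|%:R :> R by rewrite ler1n; apply/card_gt0P; exists i0.
have excess : g i0 - (w - eta) <= #|I|%:R * eta.
  have <- : \sum_i (g i - (w - eta)) = #|I|%:R * eta.
    by rewrite sumrB sum_g sumr_const -[(w - eta) *+ _]mulr_natl mulrBr card_w; ring.
  by rewrite (bigD1 i0) //= lerDl sumr_ge0 // => i _; rewrite subr_ge0.
have := g_ge i0; have : eta <= #|I|%:R * eta by rewrite ler_peMl.
rewrite ler_norml; move=> *; apply/andP; split; lra.
Qed.

Lemma card_ord_count M (P : pred nat) : #|[pred a : 'I_M | P a]| = count P (iota 0 M).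
Proof. by rewrite -sum1_card -(big_mkord P (fun=> 1%N)) sum1_count /index_iota subn0. Qed.

Lemma count_lt_iota (R : realFieldType) (z : R) M : -1 <= z -> z <= M%:R ->
  `|(count (fun a : nat => a%:R < z) (iota 0 M))%:R - z| <= 1.
Proof.
move=> z_ge; elim: M => [|M IH] z_le.
  by rewrite sub0r normrN ler_norml; apply/andP; split; lra.
rewrite -addn1 iotaD count_cat /= add0n addn0; have [zM | Mz] := lerP z M%:R.
  by rewrite addn0; apply: IH.
have -> : count (fun a : nat => a%:R < z) (iota 0 M) = M.
  rewrite -[RHS](size_iota 0 M); apply/eqP; rewrite -all_count; apply/allP => a.
  by rewrite mem_iota => /andP[_ aM]; apply: lt_trans Mz; rewrite ltr_nat.
by rewrite addn1 -natr1 ler_norml; move: z_le; rewrite -natr1 => ?; apply/andP; split; lra.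
Qed.

Section EquidistributedCells.
Variables (R : realType) (s q : nat) (x : nat -> 'I_s -> R).
Variable key : forall m, nat -> {ffun 'I_s -> 'I_(q ^ m)}.
Hypothesis s_gt0 : (0 < s)%N.
Hypothesis q_gt1 : (1 < q)%N.
Hypothesis x_in_cell : forall m n i,
  (key m n i)%:R / q%:R ^+ m <= x n i <= (key m n i).+1%:R / q%:R ^+ m.

Local Notation Q m := (q%:R ^+ m : R).
Local Notation weight m := ((q%:R ^+ (s * m) : R)^-1).
Local Notation cells m := {ffun 'I_s -> 'I_(q ^ m)}.

Let Q_gt0 m : 0 < Q m. Proof. by rewrite exprn_gt0 // ltr0n ltnW. Qed.

Lemma prod_side_weight m : \prod_(i : 'I_s) (Q m)^-1 = weight m.
Proof. by rewrite prodr_const card_ord exprVn -exprM mulnC. Qed.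

Lemma card_cells_weight m : #|cells m|%:R * weight m = 1.
Proof.
by rewrite card_ffun !card_ord !natrX -exprM mulnC mulfV // expf_neq0 // pnatr_eq0 -lt0n ltnW.
Qed.

Lemma cell_upper_le1 m (a : 'I_(q ^ m)) : a.+1%:R / Q m <= 1.
Proof. by rewrite ler_pdivrMr // mul1r -natrX ler_nat. Qed.

Lemma sum_freq_cells m N : (0 < N)%N -> \sum_(A : cells m) freq R (fun n => key m n == A) N = 1.
Proof.
move=> N_gt0; rewrite -(freqT R N_gt0) (@freq_lincomb R _ (fun=> 1) _ (fun A n => key m n == A)).
  by apply: eq_bigr => A _; rewrite mul1r.
move=> n; rewrite (bigD1 (key m n)) //= eqxx mul1r big1 ?addr0 // => A /negbTE.
by rewrite eq_sym => ->; rewrite mulr0.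
Qed.

(* Points of the box shrunk by eps on the lower sides can only have cell index A. *)
Lemma freq_cell_ge m (A : cells m) eps N : 0 < eps -> eps <= (Q m)^-1 ->
  weight m - s%:R * eps - (2 ^ s)%:R * star_discrepancy x N <= freq R (fun n => key m n == A) N.
Proof.
move=> eps_gt0 eps_le; pose a i := (A i)%:R / Q m + eps; pose b i := (A i).+1%:R / Q m.
have side i : b i - a i = (Q m)^-1 - eps by rewrite /a /b -natr1 mulrDl div1r; ring.
have ab i : 0 <= a i <= b i.
  rewrite -[a i <= _]subr_ge0 side subr_ge0 eps_le andbT.
  by rewrite /a addr_ge0 ?divr_ge0 ?(ltW eps_gt0) ?(ltW (Q_gt0 m)).
have box_sub : freq R (in_box x a b) N <= freq R (fun n => key m n == A) N.
  apply: ler_freq => n /forallP x_box; apply/eqP/ffunP => i; apply: val_inj => /=.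
  have /andP[ax xb] := x_box i; have /andP[kx xk] := x_in_cell m n i.
  have Qinv_gt0 : 0 < (Q m)^-1 by rewrite invr_gt0.
  have A_lt : (A i < (key m n i).+1)%N.
    rewrite -(@ltr_nat R) -(ltr_pM2r Qinv_gt0); apply: lt_le_trans xk.
    by apply: lt_le_trans ax; rewrite ltrDl.
  have k_lt : (key m n i < (A i).+1)%N.
    by rewrite -(@ltr_nat R) -(ltr_pM2r Qinv_gt0); apply: le_lt_trans xb.
  by apply/eqP; rewrite eqn_leq -ltnS k_lt -ltnS A_lt.
have box_dev := box_discrepancy_le x N ab (fun i => cell_upper_le1 (A i)).
have side_dev : `|\prod_i (b i - a i) - weight m| <= s%:R * eps.
  have -> : s%:R * eps = \sum_(i : 'I_s) eps by rewrite sumr_const card_ord mulr_natl.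
  rewrite -prod_side_weight.
  have Qinv_le1 : (Q m)^-1 <= 1 by rewrite invf_le1 // exprn_ege1 // ler1n ltnW.
  apply: le_trans (normr_prodB_le _ (u := fun i => b i - a i) _ _) _ => [i|i|].
  - by rewrite side subr_ge0 eps_le /= lerBlDr (le_trans Qinv_le1) ?lerDl ?ltW.
  - by rewrite invr_ge0 (ltW (Q_gt0 m)) Qinv_le1.
  - by apply: ler_sum => i _; rewrite side addrAC subrr add0r normrN gtr0_norm.
move: box_dev side_dev; rewrite !ler_norml => /andP[? _] /andP[? _]; lra.
Qed.

Lemma cell_equidistributed_of_ud_cube : ud_cube x -> forall m, cell_equidistributed R (key m).
Proof.
move=> /= D_cvg m A; apply/cvgrPdist_le => e e_gt0.
pose c : R := #|cells m|%:R; have c_gt0 : 0 < c by rewrite ltr0n; apply/card_gt0P; exists A.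
have small k y : 0 < k -> y <= e / (2 * c * k) -> c * (k * y) <= e / 2.
  move=> k_gt0 y_le; apply: le_trans (ler_wpM2l (ltW c_gt0) (ler_wpM2l (ltW k_gt0) y_le)) _.
  by rewrite le_eqVlt; apply/orP; left; apply/eqP; field; rewrite !gt_eqF.
have s_pos : 0 < s%:R :> R by rewrite ltr0n.
have two_s_pos : 0 < (2 ^ s)%:R :> R by rewrite ltr0n expn_gt0.
pose eps := Num.min ((Q m)^-1) (e / (2 * c * s%:R)).
have eps_gt0 : 0 < eps by rewrite lt_min invr_gt0 Q_gt0 divr_gt0 ?mulr_gt0.
have D_small : 0 < e / (2 * c * (2 ^ s)%:R) by rewrite divr_gt0 ?mulr_gt0.
near=> N; have N_gt0 : (0 < N)%N by near: N; exists 1%N.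
have D_le : star_discrepancy x N <= e / (2 * c * (2 ^ s)%:R).
  near: N; move/cvgrPdist_le: D_cvg => /(_ _ D_small); apply: filterS => N.
  by rewrite sub0r normrN ger0_norm // star_discrepancy_ge0.
pose eta := s%:R * eps + (2 ^ s)%:R * star_discrepancy x N.
have freq_ge B : weight m - eta <= freq R (fun n => key m n == B) N.
  by rewrite opprD addrA freq_cell_ge // ge_min lexx.
have eta_ge0 : 0 <= eta by rewrite addr_ge0 ?mulr_ge0 ?(ltW eps_gt0) ?star_discrepancy_ge0.
have := dist_le_of_lower_bounds A (card_cells_weight m) (sum_freq_cells m N_gt0) freq_ge eta_ge0.
move/le_trans; apply.
by rewrite mulrDr [e]splitr lerD ?small // ge_min lexx orbT.
Unshelve. all: by end_near.
Qed.

(* The cells whose corner shifted by c in every direction lies strictly below t: for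
   c = 0 they cover the anchored box [0, t), for c = 1 they are contained in it. *)
Definition cells_below c m (t : 'I_s -> R) : pred (cells m) :=
  [pred A : cells m | [forall i, (A i + c)%:R / Q m < t i]].
Arguments cells_below : clear implicits.

Lemma card_cells_below c m t : (c <= 1)%N -> unit_cube t ->
  `|#|cells_below c m t|%:R * weight m - \prod_i t i| <= s%:R * (2 / Q m).
Proof.
move=> c_le1 t01; pose below i := [pred a : 'I_(q ^ m) | (a + c)%:R / Q m < t i].
have -> : #|cells_below c m t| = (\prod_i #|below i|)%N.
  rewrite -(@eq_card _ (family below)) => [|A].
    by rewrite card_family foldrE big_map big_enum.
  by rewrite inE; apply/familyP/forallP => A_below i; have := A_below i; rewrite !inE.
rewrite natr_prod -prod_side_weight -big_split /=.
have -> : s%:R * (2 / Q m) = \sum_(i : 'I_s) 2 / Q m by rewrite sumr_const card_ord mulr_natl.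
have below_approx i : `|#|below i|%:R / Q m - t i| <= 2 / Q m /\ (#|below i| <= q ^ m)%N.
  have /andP[t0 t1] := t01 i; have c_le1R : c%:R <= 1 :> R by rewrite lern1.
  split; last by rewrite -[X in (_ <= X)%N]card_ord max_card.
  rewrite /below (card_ord_count _ (fun a : nat => (a + c)%:R / Q m < t i)).
  rewrite (eq_count (a2 := fun a : nat => a%:R < t i * Q m - c%:R)) => [|a].
    have : -1 <= t i * Q m - c%:R by have := mulr_ge0 t0 (ltW (Q_gt0 m)); lra.
    have : t i * Q m - c%:R <= (q ^ m)%:R.
      by rewrite natrX; have := ler_piMl (ltW (Q_gt0 m)) t1; have := ler0n R c; lra.
    move=> /(count_lt_iota _) cnt_le /cnt_le; set cnt := count _ _ => cnt_dev.
    have Qinv_gt0 : 0 < (Q m)^-1 by rewrite invr_gt0.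
    rewrite -[t i](mulfK (lt0r_neq0 (Q_gt0 m))) -mulrBl normrM (gtr0_norm Qinv_gt0) ler_pM2r //.
    by move: cnt_dev (ler0n R c); rewrite !ler_norml => /andP[? ?] ?; apply/andP; split; lra.
  by rewrite /= ltr_pdivrMr // natrD ltrBrDr.
apply: le_trans (normr_prodB_le _ (v := t) _ _) _ => [i|//|].
- have [_ le_qm] := below_approx i.
  by rewrite divr_ge0 ?ler0n ?(ltW (Q_gt0 m)) //= ler_pdivrMr // mul1r -natrX ler_nat.
- by apply: ler_sum => i _; case: (below_approx i).
Qed.

Lemma freq_cells_in m N d (S : pred (cells m)) :
  (forall A, `|weight m - freq R (fun n => key m n == A) N| <= d) ->
  `|freq R (fun n => key m n \in S) N - #|S|%:R * weight m| <= #|S|%:R * d.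
Proof.
move=> near_weight; have sum_in y : \sum_(A : cells m) (A \in S)%:R * y = #|S|%:R * y.
  rewrite -mulr_suml -natr_sum -sum1_card [in RHS]big_mkcond /=.
  by congr (_%:R * _); apply: eq_bigr => A _; case: (A \in S).
rewrite (@freq_lincomb R _ (fun A => (A \in S)%:R) _ (fun A n => key m n == A)) => [|n].
  rewrite -sum_in -sumrB -sum_in; apply: le_trans (ler_norm_sum _ _ _) _.
  by apply: ler_sum => A _; rewrite -mulrBr normrM ger0_norm // ler_wpM2l // distrC.
rewrite (bigD1 (key m n)) //= eqxx mulr1 big1 ?addr0 // => A.
by rewrite eq_sym => /negbTE ->; rewrite mulr0.
Qed.

(* Anchored boxes are sandwiched between unions of cells of side q^-m. *)
Lemma anchored_discrepancy_le m N d t : unit_cube t ->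
  (forall A, `|weight m - freq R (fun n => key m n == A) N| <= d) -> 0 <= d ->
  `|freq R (in_box x (fun=> 0) t) N - \prod_i t i| <= s%:R * (2 / Q m) + #|cells m|%:R * d.
Proof.
move=> t01 near_weight d_ge0.
have cells_d (S : pred (cells m)) : #|S|%:R * d <= #|cells m|%:R * d.
  by apply: ler_wpM2r; rewrite // ler_nat max_card.
have sub_anchored : freq R (fun n => key m n \in cells_below 1 m t) N <=
    freq R (in_box x (fun=> 0) t) N.
  apply: ler_freq => n; rewrite inE => /forallP below; apply/forallP => i.
  have /andP[kx xk] := x_in_cell m n i; have := below i; rewrite addn1 => kt.
  by rewrite (le_lt_trans xk kt) andbT (le_trans _ kx) ?divr_ge0 ?(ltW (Q_gt0 m)).
have anchored_sub : freq R (in_box x (fun=> 0) t) N <=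
    freq R (fun n => key m n \in cells_below 0 m t) N.
  apply: ler_freq => n /forallP anchored; rewrite inE; apply/forallP => i.
  have /andP[_ xt] := anchored i; have /andP[kx _] := x_in_cell m n i.
  by rewrite addn0 (le_lt_trans kx xt).
have := freq_cells_in (cells_below 1 m t) near_weight.
have := freq_cells_in (cells_below 0 m t) near_weight.
have := card_cells_below m (leqnn 1) t01; have := card_cells_below m (leq0n 1) t01.
have := cells_d (cells_below 0 m t); have := cells_d (cells_below 1 m t).
rewrite !ler_norml => ? ? /andP[? ?] /andP[? ?] /andP[? ?] /andP[? ?].
by apply/andP; split; lra.
Qed.

Lemma ud_cube_of_cell_equidistributed :
  (forall m, (0 < m)%N -> cell_equidistributed R (key m)) -> ud_cube x.
Proof.
move=> equi /=; apply/cvgrPdist_le => e e_gt0.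
pose m := (Num.Def.archi_bound (4 * s%:R / e)).+1.
have mesh_small : s%:R * (2 / Q m) <= e / 2.
  have : 4 * s%:R / e < Q m.
    apply: lt_trans (archi_boundP _) _; first by rewrite divr_ge0 ?mulr_ge0 ?(ltW e_gt0).
    by rewrite -natrX ltr_nat (ltn_trans (ltnSn _)) // ltn_expl.
  rewrite ltr_pdivrMr // mulrA ler_pdivrMr ?Q_gt0 //; lra.
pose c : R := #|cells m|%:R.
have c_gt0 : 0 < c.
  have qm_gt0 : (0 < q ^ m)%N by rewrite expn_gt0 ltnW.
  by rewrite ltr0n; apply/card_gt0P; exists [ffun=> Ordinal qm_gt0].
have d_gt0 : 0 < e / (2 * c) by rewrite divr_gt0 ?mulr_gt0.
have c_half : c * (e / (2 * c)) = e / 2 by field; exact: lt0r_neq0.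
have near_weight : \forall N \near \oo, forall A : cells m,
    `|weight m - freq R (fun n => key m n == A) N| <= e / (2 * c).
  by apply: filter_forall => A; move/cvgrPdist_le: (equi m isT A); apply.
near=> N; rewrite sub0r normrN ger0_norm ?star_discrepancy_ge0 //.
apply: star_discrepancy_le => t t01.
apply: le_trans (anchored_discrepancy_le (m := m) t01 _ (ltW d_gt0)) _; first by near: N.
by rewrite [leRHS]splitr lerD // c_half.
Unshelve. all: by end_near.
Qed.

End EquidistributedCells.

Theorem theorem2 (R : realType) (F : finFieldType) (s : nat)
    (C : 'I_s -> nat -> nat -> F) :
  (1 <= s)%N ->
  finite_row C ->
  optimal_row_lengths C ->
  (* Algorithm 1 (s_n = n, psi_r(0) = 0 for large r) yields a (0,s)-sequence
     for some admissible choice of bijections *)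
  (exists (psi1 : nat -> 'I_#|F| -> F) (lam1 : 'I_s -> nat -> F -> 'I_#|F|),
      (forall r, bijective (psi1 r)) /\
      (exists r0, forall r, (r0 <= r)%N -> psi1 r (digit0 F) = 0) /\
      (forall i j, bijective (lam1 i j)) /\
      is_Tseq #|F| (fun _ => 0%N)
        (fun n => alg_point R C psi1 lam1 (nat_zq F n))
        (fun m n => alg_trunc R C psi1 lam1 m (nat_zq F n))) ->
  forall (psi : nat -> 'I_#|F| -> F) (lam : 'I_s -> nat -> F -> 'I_#|F|)
         (sn : nat -> zq F),
    (forall r, bijective (psi r)) ->
    (forall i j, bijective (lam i j)) ->
    (ud_cube (fun n => alg_point R C psi lam (sn n)) <-> ud_zq R sn).
Proof.
(* alg_digit already truncates row j at s j. *)
move=> s_gt0 _ _ [psi1 [lam1 [psi1_bij [_ [_ [_ [_ tseq]]]]]]] psi lam sn psi_bij lam_bij.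
have net1 m : (0 < m)%N ->
    is_net #|F| 0 m (fun n => alg_trunc R C psi1 lam1 m (nat_zq F n)) 0.
  by move=> m_gt0; have := tseq 0%N m m_gt0; rewrite mul0n.
have in_cell m n i := alg_point_in_cell R C psi lam m (sn n) i.
have q_gt1 := card_finField_gt1 F.
rewrite (ud_zq_cellsP psi1_bij net1 s_gt0 _ psi_bij lam_bij); split => [ud m _|].
  exact: cell_equidistributed_of_ud_cube in_cell ud m.
exact: ud_cube_of_cell_equidistributed in_cell.
Qed.
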